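(* For every graph $G$, $$\Gamma(G) \le \gamma_{\rm i}(G) \le \gamma_{\rm gr}(G).$$ Moreover, $\gamma_{\rm i}$ is incomparable with both $\gamma_g$ and $\mathrm{IR}$; that is, there exist graphs $G$ with $\gamma_{\rm i}(G) > \gamma_g(G)$ and graphs $G$ with $\gamma_{\rm i}(G) < \gamma_g(G)$, and there exist graphs $G$ with $\gamma_{\rm i}(G) > \mathrm{IR}(G)$ and graphs $G$ with $\gamma_{\rm i}(G) < \mathrm{IR}(G)$.
   Context: All graphs are finite and simple. $N[v]$ is the closed neighborhood of $v$, and $N[S]=\bigcup_{v\in S}N[v]$. A set $D$ is dominating if $N[D]=V(G)$. Indicated domination game on $G$: two players, Dominator and Staller, alternate. In each round Dominator indicates a vertex $v$ not yet dominated by the vertices previously selected by Staller, and Staller must select a vertex of $N[v]$, adding it to a set $D$. The game ends when $D$ is a dominating set. Dominator wants to minimize $|D|$ and Staller to maximize it; the size of $D$ under optimal play of both is the indicated domination number $\gamma_{\rm i}(G)$. $\Gamma(G)$ (upper domination number) is the maximum size of a minimal dominating set. For $S\subseteq V(G)$ and $x\in S$, a private neighbor of $x$ with respect to $S$ is a vertex of $N[S]\setminus N[S\setminus\{x\}]$; $S$ is irredundant if every vertex of $S$ has a private neighbor with respect to $S$, and $\mathrm{IR}(G)$ is the maximum size of a maximal irredundant set. A sequence $(v_1,\dots,v_k)$ of vertices is a dominating sequence if $N[v_i]\setminus\bigcup_{j<i}N[v_j]\ne\emptyset$ for each $i$ and $\{v_1,\dots,v_k\}$ dominates $G$; the Grundy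 domination number $\gamma_{\rm gr}(G)$ is the maximum length of a dominating sequence. Domination game: Dominator and Staller alternately select vertices of $G$, Dominator starting; a move is legal if the selected vertex dominates at least one vertex not dominated by previously selected vertices; the game ends when no legal move exists. Dominator wants to minimize and Staller to maximize the number of moves; the number of moves under optimal play is the game domination number $\gamma_g(G)$. *)

From mathcomp Require Import all_boot.
Set Implicit Arguments. Unset Strict Implicit. Unset Printing Implicit Defensive.

Record sgraph := SGraph {
  svert :> finType;
  sadj : rel svert;
  sadj_sym : symmetric sadj;
  sadj_irr : irreflexive sadj }.

Section Dom.
Variable G : sgraph.
Local Notation T := (svert G).
Local Notation e := (@sadj G).

Definition cnbhd (v : T) : {set T} := [set u | (u == v) || e v u].
Definition cnbhds (S : {set T}) : {set T} := \bigcup_(v in S) cnbhd v.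
Definition dominating (D : {set T}) : bool := cnbhds D == [set: T].

Definition minimal_dominating (D : {set T}) : bool :=
  dominating D && [forall D' : {set T}, (D' \proper D) ==> ~~ dominating D'].
Definition upper_domination : nat :=
  \max_(D : {set T} | minimal_dominating D) #|D|.

Definition irredundant (S : {set T}) : bool :=
  [forall x in S, exists w, w \in cnbhds S :\: cnbhds (S :\ x)].
Definition maximal_irredundant (S : {set T}) : bool :=
  irredundant S && [forall S' : {set T}, (S \proper S') ==> ~~ irredundant S'].
Definition upper_irredundance : nat :=
  \max_(S : {set T} | maximal_irredundant S) #|S|.

Fixpoint legal_from (S : {set T}) (s : seq T) : bool :=
  if s is v :: s' then ~~ (cnbhd v \subset cnbhds S) && legal_from (v |: S) s'
  else true.
Definition dominating_sequence (s : seq T) : bool :=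
  legal_from set0 s && dominating [set x in s].
(* every dominating sequence has length <= #|T|, so the range below is exhaustive *)
Definition grundy_domination : nat :=
  \max_(k < #|T|.+1 | [exists s : k.-tuple T, dominating_sequence s]) k.

(* Indicated domination game. ind_rem n D = number of further vertices added to
   D under optimal play, from position D (Staller's selections so far), with
   recursion fuel n.  Each round adds a new vertex, so fuel #|T| suffices.
   The min is over a nonempty set whenever it is used, so its seed #|T|.+1
   never contributes. *)
Fixpoint ind_rem (n : nat) (D : {set T}) : nat :=
  if n is n'.+1 then
    if dominating D then 0
    else \big[minn/#|T|.+1]_(v in ~: cnbhds D)
           \max_(u in cnbhd v) (ind_rem n' (u |: D)).+1
  else 0.
Definition indicated_domination : nat := ind_rem #|T| set0.

(* Each move dominates a new vertex, so fuel #|T| suffices. *)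
Definition legal_move (S : {set T}) (v : T) : bool :=
  ~~ (cnbhd v \subset cnbhds S).
Fixpoint game_rem (n : nat) (S : {set T}) (dom_turn : bool) : nat :=
  if n is n'.+1 then
    if dominating S then 0
    else if dom_turn then
      \big[minn/#|T|.+1]_(v | legal_move S v) (game_rem n' (v |: S) false).+1
    else \max_(v | legal_move S v) (game_rem n' (v |: S) true).+1
  else 0.
Definition game_domination : nat := game_rem #|T| set0 true.

End Dom.

From mathcomp Require Import all_boot.
Set Implicit Arguments. Unset Strict Implicit. Unset Printing Implicit Defensive.

(* For Gamma <= gamma_i, Staller fixes a largest minimal dominating set M and
   always selects inside M: an undominated indicated vertex has a neighbour in M
   not selected yet, and by minimality no proper subset of M dominates, so the
   game lasts at least |M| rounds.  For gamma_i <= gamma_gr, whatever Dominator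
   does, Staller's selections form a dominating sequence, because each selected
   vertex dominates the indicated vertex, which was undominated before. *)

Lemma geq_bigminn_cond (I : finType) (P : pred I) (x : nat) (F : I -> nat) i0 :
  P i0 -> \big[minn/x]_(i | P i) F i <= F i0.
Proof.
move=> Pi0; elim: (index_enum I) (mem_index_enum i0) => [|j r IHr] //.
rewrite big_cons inE => /predU1P [<-|/IHr le_r]; first by rewrite Pi0 geq_minl.
by case: ifP => // _; rewrite geq_min le_r orbT.
Qed.

Section Graph.
Variable G : sgraph.
Implicit Types (u v x : G) (D M S : {set G}) (s : seq G).

Lemma cnbhdC u v : (u \in cnbhd v) = (v \in cnbhd u).
Proof. by rewrite !inE eq_sym sadj_sym. Qed.

Lemma cnbhd_id v : v \in cnbhd v.
Proof. by rewrite inE eqxx. Qed.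

Lemma cnbhdsP x D : reflect (exists2 v, v \in D & x \in cnbhd v) (x \in cnbhds D).
Proof. exact: bigcupP. Qed.

Lemma cnbhd_subset v D : v \in D -> cnbhd v \subset cnbhds D.
Proof. by move=> vD; apply/subsetP => x xv; apply/cnbhdsP; exists v. Qed.

Lemma mem_cnbhds x D : x \in D -> x \in cnbhds D.
Proof. by move=> xD; apply/cnbhdsP; exists x; last exact: cnbhd_id. Qed.

Lemma dominatingP D : reflect (forall x, x \in cnbhds D) (dominating D).
Proof.
apply: (iffP eqP) => [-> x|domD]; first by rewrite inE.
by apply/setP => x; rewrite domD inE.
Qed.

Lemma dominatingPn D : reflect (exists v, v \notin cnbhds D) (~~ dominating D).
Proof.
apply: (iffP idP) => [nDomD|[v /negP nDv]]; last by apply/dominatingP.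
apply/existsP; apply: contraR nDomD => /existsPn nD; apply/dominatingP => x.
exact/negPn/nD.
Qed.

Lemma legal_from_rcons S s u :
  legal_from S (rcons s u) = legal_from S s && legal_move (S :|: [set x in s]) u.
Proof.
elim: s S => [|v s IHs] S /=; first by rewrite andbT setU0.
rewrite IHs andbA; congr (_ && legal_move _ u).
by apply/setP => x; rewrite !inE orbA (orbC (x == v)).
Qed.

Lemma legal_from_uniq S s : legal_from S s -> uniq s && all (fun x => x \notin S) s.
Proof.
elim: s S => [|v s IHs] S //= /andP [legal_v /IHs /andP [uniq_s /allP notS_s]].
have vS : v \notin S by apply: contra legal_v => /cnbhd_subset.
rewrite uniq_s vS andbT /=; apply/andP; split.
  by apply/negP => /notS_s; rewrite setU11.
by apply/allP => x /notS_s; rewrite in_setU negb_or => /andP [].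
Qed.

Lemma dominating_sequence_size s :
  dominating_sequence s -> size s <= grundy_domination G.
Proof.
move=> seq_s; have /andP [legal_s _] := seq_s.
have /andP [uniq_s _] := legal_from_uniq legal_s.
have size_s : size s < #|G|.+1 by rewrite ltnS -(card_uniqP uniq_s) max_card.
apply: (@leq_bigmax_cond _ _ _ (Ordinal size_s)).
by apply/existsP; exists (in_tuple s).
Qed.

Lemma legal_from_full_dominating s :
  legal_from set0 s -> #|G| <= size s -> dominating [set x in s].
Proof.
move=> legal_s full_s; have /andP [uniq_s _] := legal_from_uniq legal_s.
have -> : [set x in s] = [set: G].
  by apply/eqP; rewrite eqEcard subsetT cardsT cardsE (card_uniqP uniq_s).
by apply/dominatingP => x; rewrite mem_cnbhds ?inE.
Qed.

Lemma ind_rem_legal_le_grundy n s :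
  legal_from set0 s -> #|G| <= n + size s ->
  size s + ind_rem n [set x in s] <= grundy_domination G.
Proof.
elim: n s => [|n IHn] s legal_s fuel_s /=.
  rewrite addn0 dominating_sequence_size // /dominating_sequence legal_s.
  exact: legal_from_full_dominating.
case: ifPn => [domD|/dominatingPn [v0 v0_undom]].
  by rewrite addn0 dominating_sequence_size // /dominating_sequence legal_s domD.
have IH u : u \in cnbhd v0 ->
    (size s).+1 + ind_rem n (u |: [set x in s]) <= grundy_domination G.
  move=> uv0; have legal_su : legal_from set0 (rcons s u).
    by rewrite legal_from_rcons legal_s set0U; apply/subsetPn; exists v0; rewrite // cnbhdC.
  have set_su : [set x in rcons s u] = u |: [set x in s].
    by apply/setP => x; rewrite !inE mem_rcons inE.
  by rewrite -set_su -(size_rcons s u) IHn // size_rcons addnS.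
have le_s : size s <= grundy_domination G.
  by apply: leq_trans (IH v0 (cnbhd_id v0)); rewrite addSnnS leq_addr.
rewrite -leq_subRL //; apply: leq_trans (geq_bigminn_cond _ _ (_ : v0 \in ~: _)) _.
  by rewrite inE.
by apply/bigmax_leqP => u uv0; rewrite leq_subRL // addnS -addSn; exact: IH.
Qed.

Lemma indicated_le_grundy : indicated_domination G <= grundy_domination G.
Proof.
have := @ind_rem_legal_le_grundy #|G| [::] isT; rewrite addn0 => /(_ (leqnn _)).
by rewrite (_ : [set x in [::]] = set0) //; apply/setP => x; rewrite !inE.
Qed.

Lemma minimal_dominating_le_ind_rem M n D :
  minimal_dominating M -> D \subset M -> #|M :\: D| <= n -> #|M :\: D| <= ind_rem n D.
Proof.
case/andP => domM /forallP minM; elim: n D => [//|n IHn] D DM /= fuel.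
case: ifPn => [domD|undomD].
  have: ~~ (D \proper M) by apply: contraL domD => /(implyP (minM D)).
  by rewrite properEneq DM andbT negbK => /eqP ->; rewrite setDv cards0.
apply: (big_ind (fun k => #|M :\: D| <= k)) => [|a b le_a le_b|v].
- exact: leq_trans (max_card _) (leqnSn _).
- by rewrite leq_min le_a le_b.
rewrite inE => v_undom.
have /cnbhdsP [x xM vx] : v \in cnbhds M by move/dominatingP: domM.
have xD : x \notin D by apply: contra v_undom => xD; apply/cnbhdsP; exists x.
have card_MD : #|M :\: D| = (#|M :\: (x |: D)|).+1.
  rewrite (cardsD1 x) !inE xD xM; congr (_.+1); apply: eq_card => y.
  by rewrite !inE negb_or andbA.
have xv : x \in cnbhd v by rewrite cnbhdC.
apply: leq_trans (leq_bigmax_cond _ xv); rewrite card_MD ltnS IHn //.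
  by rewrite subUset sub1set xM.
by rewrite -ltnS -card_MD.
Qed.

Lemma upper_domination_le_indicated : upper_domination G <= indicated_domination G.
Proof.
apply/bigmax_leqP => M minM.
have := @minimal_dominating_le_ind_rem M #|G| set0 minM (sub0set M).
by rewrite setD0; apply; exact: max_card.
Qed.

Lemma cnbhdsS S S' : S \subset S' -> cnbhds S \subset cnbhds S'.
Proof.
move=> sSS'; apply/subsetP => x /cnbhdsP [v vS xv].
by apply/cnbhdsP; exists v; rewrite ?(subsetP sSS').
Qed.

Lemma irredundant_subset S S' : S \subset S' -> irredundant S' -> irredundant S.
Proof.
move=> sSS' /forall_inP irrS'; apply/forall_inP => x xS.
have [w] := existsP (irrS' x (subsetP sSS' x xS)).
rewrite inE => /andP [w_nS'x /cnbhdsP [v vS' wv]].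
have vx : v = x.
  apply/eqP; apply: contraNT w_nS'x => vx.
  by apply/cnbhdsP; exists v; rewrite // !inE vx.
apply/existsP; exists w; rewrite inE; apply/andP; split.
  by apply: contra w_nS'x; apply/subsetP/cnbhdsS/setSD.
by apply/cnbhdsP; exists x; rewrite // -vx.
Qed.

Lemma maximal_irredundantP S : irredundant S ->
  (forall x, x \notin S -> ~~ irredundant (x |: S)) -> maximal_irredundant S.
Proof.
move=> irrS maxS; rewrite /maximal_irredundant irrS; apply/forallP => S'.
apply/implyP => /properP [sSS' [x xS' xS]]; apply: contra (maxS x xS).
by apply: irredundant_subset; rewrite subUset sub1set xS'.
Qed.

End Graph.

Definition foldr_iota (R : Type) (n : nat) (op : R -> R -> R) (x : R)
    (P : pred nat) (F : nat -> R) : R :=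
  foldr (fun j acc => if P j then op (F j) acc else acc) x (iota 0 n).

Lemma big_ord_foldr_iota (R : Type) (op : R -> R -> R) (x : R) (n : nat)
    (P : pred 'I_n) (F : 'I_n -> R) (P' : pred nat) (F' : nat -> R) :
  (forall i : 'I_n, P i = P' i) -> (forall i : 'I_n, P i -> F i = F' i) ->
  \big[op/x]_(i | P i) F i = foldr_iota n op x P' F'.
Proof.
move=> PE FE; rewrite (eq_big (fun i : 'I_n => P' i) (fun i : 'I_n => F' i) PE FE).
by rewrite -(big_mkord P' F') unlock /index_iota subn0.
Qed.

Fixpoint subseqs (T : Type) (s : seq T) : seq (seq T) :=
  if s is a :: s' then [seq a :: l | l <- subseqs s'] ++ subseqs s' else [:: [::]].

Lemma filter_mem_subseqs (T : eqType) (q : pred T) (s : seq T) : filter q s \in subseqs s.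
Proof.
elim: s => [|a s IHs] /=; first by rewrite inE.
by rewrite mem_cat; case: (q a); rewrite ?IHs ?orbT ?(map_f (cons a) IHs).
Qed.

Section NatGraph.
Variables (n : nat) (adj : rel nat).
Hypotheses (adj_sym : symmetric adj) (adj_irr : irreflexive adj).

Definition nat_graph : sgraph :=
  @SGraph 'I_n (fun i j => adj i j) (fun i j => adj_sym i j) (fun i => adj_irr i).

Local Notation G := nat_graph.
Implicit Types (p : pred nat) (D : {set G}).

(* Finsets and big operators are locked and do not reduce under vm_compute, so
   the parameters are mirrored by executable recursions on the vertices
   0, ..., n-1, a vertex set being encoded by a predicate on nat. *)

Definition in_cnbhd_nat (v u : nat) : bool := (u == v) || adj v u.

Definition cnbhds_nat p (x : nat) : bool :=
  has (fun v => p v && in_cnbhd_nat v x) (iota 0 n).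

Definition dominating_nat p : bool := all (cnbhds_nat p) (iota 0 n).

Definition setU1_nat (u : nat) p : pred nat := fun i => (i == u) || p i.

Definition setD1_nat p (x : nat) : pred nat := fun i => (i != x) && p i.

Fixpoint ind_rem_nat (k : nat) p : nat :=
  if k is k'.+1 then
    if dominating_nat p then 0
    else foldr_iota n minn n.+1 (fun v => ~~ cnbhds_nat p v)
           (fun v => foldr_iota n maxn 0 (in_cnbhd_nat v)
                       (fun u => (ind_rem_nat k' (setU1_nat u p)).+1))
  else 0.

Definition legal_move_nat p (v : nat) : bool :=
  has (fun u => in_cnbhd_nat v u && ~~ cnbhds_nat p u) (iota 0 n).

Fixpoint game_rem_nat (k : nat) p (dom_turn : bool) : nat :=
  if k is k'.+1 then
    if dominating_nat p then 0
    else if dom_turn then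
      foldr_iota n minn n.+1 (legal_move_nat p)
        (fun v => (game_rem_nat k' (setU1_nat v p) false).+1)
    else foldr_iota n maxn 0 (legal_move_nat p)
        (fun v => (game_rem_nat k' (setU1_nat v p) true).+1)
  else 0.

Definition irredundant_nat p : bool :=
  all (fun x => p x ==> has (fun w => cnbhds_nat p w && ~~ cnbhds_nat (setD1_nat p x) w)
                            (iota 0 n))
      (iota 0 n).

Definition card_nat p : nat := count p (iota 0 n).

Definition represents D p : Prop := forall i : 'I_n, (i \in D) = p i.

Lemma represents_set0 : represents set0 (fun=> false).
Proof. by move=> i; rewrite inE. Qed.

Lemma represents_setU1 D p (u : G) : represents D p -> represents (u |: D) (setU1_nat u p).
Proof. by move=> rD i; rewrite !inE rD. Qed.

Lemma represents_setD1 D p (x : G) : represents D p -> represents (D :\ x) (setD1_nat p x).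
Proof. by move=> rD i; rewrite !inE rD. Qed.

Lemma mem_iota_ord (i : 'I_n) : val i \in iota 0 n.
Proof. by rewrite mem_iota ltn_ord. Qed.

Lemma cnbhds_natE D p : represents D p -> forall x : G, (x \in cnbhds D) = cnbhds_nat p x.
Proof.
move=> rD x; apply/cnbhdsP/hasP => [[v vD xv]|[j]].
  by exists (val v); rewrite ?mem_iota_ord // -rD vD; rewrite inE in xv.
rewrite mem_iota => /= jn /andP [pj xj]; exists (Ordinal jn); first by rewrite rD.
by rewrite inE.
Qed.

Lemma dominating_natE D p : represents D p -> dominating D = dominating_nat p.
Proof.
move=> rD; apply/dominatingP/allP => [domD j|domp x].
  by rewrite mem_iota /= => jn; rewrite -(cnbhds_natE rD (Ordinal jn)).
by rewrite (cnbhds_natE rD) domp ?mem_iota_ord.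
Qed.

Lemma legal_move_natE D p (v : G) : represents D p -> legal_move D v = legal_move_nat p v.
Proof.
move=> rD; apply/subsetPn/hasP => [[u uv uD]|[j]].
  exists (val u); rewrite ?mem_iota_ord // -(cnbhds_natE rD) uD andbT.
  by rewrite inE in uv.
rewrite mem_iota /= => jn /andP [vj jD]; exists (Ordinal jn); first by rewrite inE.
by rewrite (cnbhds_natE rD).
Qed.

Lemma irredundant_natE D p : represents D p -> irredundant D = irredundant_nat p.
Proof.
move=> rD; apply/forall_inP/allP => [irrD j|irrp x xD].
  rewrite mem_iota /= => jn; apply/implyP; rewrite -(rD (Ordinal jn)) => /irrD /existsP [w].
  rewrite inE => /andP [w_nDx w_nD]; apply/hasP; exists (val w); first exact: mem_iota_ord.
  rewrite -(cnbhds_natE rD) -(cnbhds_natE (represents_setD1 (Ordinal jn) rD)).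
  by rewrite w_nD w_nDx.
have /hasP [j] := implyP (irrp _ (mem_iota_ord x)) (etrans (esym (rD x)) xD).
rewrite mem_iota /= => jn /andP [j_np j_npx]; apply/existsP; exists (Ordinal jn).
by rewrite inE (cnbhds_natE rD) (cnbhds_natE (represents_setD1 x rD)) j_np j_npx.
Qed.

Lemma card_natE D p : represents D p -> #|D| = card_nat p.
Proof.
move=> rD; rewrite -sum1_card (eq_bigl (fun i : 'I_n => p i)) //.
by rewrite -(big_mkord p (fun=> 1)) sum1_count /index_iota subn0.
Qed.

Lemma ind_rem_natE k D p : represents D p -> ind_rem k D = ind_rem_nat k p.
Proof.
elim: k D p => [//|k IHk] D p rD /=; rewrite (dominating_natE rD) card_ord.
case: ifP => // _; apply: big_ord_foldr_iota => [v|v _].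
  by rewrite inE (cnbhds_natE rD).
apply: big_ord_foldr_iota => [u|u _]; first by rewrite inE.
by rewrite (IHk _ _ (represents_setU1 u rD)).
Qed.

Lemma game_rem_natE k D p t : represents D p -> game_rem k D t = game_rem_nat k p t.
Proof.
elim: k D p t => [//|k IHk] D p t rD /=; rewrite (dominating_natE rD) card_ord.
by case: ifP => // _; case: t; apply: big_ord_foldr_iota => v;
  rewrite ?(legal_move_natE _ rD) // => _; rewrite (IHk _ _ _ (represents_setU1 v rD)).
Qed.

Lemma indicated_domination_nat : indicated_domination G = ind_rem_nat n (fun=> false).
Proof. by rewrite /indicated_domination card_ord (ind_rem_natE _ represents_set0). Qed.

Lemma game_domination_nat : game_domination G = game_rem_nat n (fun=> false) true.
Proof. by rewrite /game_domination card_ord (game_rem_natE _ _ represents_set0). Qed.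

Lemma upper_irredundance_le_nat k :
  all (fun l => irredundant_nat [in l] ==> (card_nat [in l] <= k)) (subseqs (iota 0 n)) ->
  upper_irredundance G <= k.
Proof.
move=> /allP bound; apply/bigmax_leqP => S /andP [irrS _].
pose l := filter [in [seq val i | i in S]] (iota 0 n).
have rS : represents S [in l].
  by move=> i; rewrite /l mem_filter mem_iota_ord andbT /= (mem_map val_inj) mem_enum.
have := bound l (filter_mem_subseqs _ _).
by rewrite -(irredundant_natE rS) irrS -(card_natE rS).
Qed.

Lemma card_nat_le_upper_irredundance (l : seq nat) :
  irredundant_nat [in l] ->
  all (fun x => (x \in l) || ~~ irredundant_nat (setU1_nat x [in l])) (iota 0 n) ->
  card_nat [in l] <= upper_irredundance G.
Proof.
move=> irr_l /allP max_l; pose S : {set G} := [set i | val i \in l].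
have rS : represents S [in l] by move=> i; rewrite inE.
rewrite -(card_natE rS); apply: leq_bigmax_cond.
apply: maximal_irredundantP => [|x xS]; first by rewrite (irredundant_natE rS).
rewrite (irredundant_natE (represents_setU1 x rS)).
by have := max_l _ (mem_iota_ord x); rewrite /= -rS (negbTE xS).
Qed.

End NatGraph.

Definition edge_rel (es : seq (nat * nat)) : rel nat :=
  fun i j => ((i, j) \in es) || ((j, i) \in es).

Lemma edge_rel_sym es : symmetric (edge_rel es).
Proof. by move=> i j; rewrite /edge_rel orbC. Qed.

Lemma edge_rel_irr es : all (fun e => e.1 != e.2) es -> irreflexive (edge_rel es).
Proof. by move=> /allP loopless i; rewrite /edge_rel orbb; apply/negP => /loopless /eqP. Qed.

Definition edge_graph n es (loopless : all (fun e => e.1 != e.2) es) : sgraph :=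
  nat_graph n (edge_rel_sym es) (edge_rel_irr loopless).

(* Dominator ends the domination game at once with the centre, whereas in the
   indicated game Staller can always select a leaf, leaving the other leaf
   undominated. *)
Definition P3 := @edge_graph 3 [:: (0, 1); (0, 2)] isT.

Lemma game_lt_indicated_P3 : game_domination P3 < indicated_domination P3.
Proof. by rewrite game_domination_nat indicated_domination_nat; vm_compute. Qed.

Definition H6 :=
  @edge_graph 6 [:: (0, 1); (0, 3); (0, 5); (1, 2); (1, 5); (2, 3); (2, 4); (3, 4)] isT.

Lemma indicated_lt_game_H6 : indicated_domination H6 < game_domination H6.
Proof. by rewrite game_domination_nat indicated_domination_nat; vm_compute. Qed.

Definition C5 := @edge_graph 5 [:: (0, 1); (1, 2); (2, 3); (3, 4); (4, 0)] isT.

Lemma upper_irredundance_lt_indicated_C5 :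
  upper_irredundance C5 < indicated_domination C5.
Proof.
apply: (@leq_ltn_trans 2); first by apply: upper_irredundance_le_nat; vm_compute.
by rewrite indicated_domination_nat; vm_compute.
Qed.

Definition H8 := @edge_graph 8
  [:: (0, 1); (0, 2); (0, 5); (0, 7); (1, 2); (1, 7); (2, 4); (2, 7);
      (3, 4); (3, 5); (3, 6); (4, 5); (4, 6); (5, 6); (6, 7)] isT.

Lemma indicated_lt_upper_irredundance_H8 :
  indicated_domination H8 < upper_irredundance H8.
Proof.
apply: (@leq_trans 3); first by rewrite indicated_domination_nat; vm_compute.
apply: leq_trans (card_nat_le_upper_irredundance _ _ (l := [:: 4; 5; 6]) _ _);
  by vm_compute.
Qed.

Theorem proposition3p1 :
  (forall G : sgraph,
     upper_domination G <= indicated_domination G <= grundy_domination G) /\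
  (exists G : sgraph, indicated_domination G > game_domination G) /\
  (exists G : sgraph, indicated_domination G < game_domination G) /\
  (exists G : sgraph, indicated_domination G > upper_irredundance G) /\
  (exists G : sgraph, indicated_domination G < upper_irredundance G).
Proof.
split; first by move=> G; rewrite upper_domination_le_indicated indicated_le_grundy.
split; first by exists P3; exact: game_lt_indicated_P3.
split; first by exists H6; exact: indicated_lt_game_H6.
split; first by exists C5; exact: upper_irredundance_lt_indicated_C5.
by exists H8; exact: indicated_lt_upper_irredundance_H8.
Qed.
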